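(* Let $n\ge 4$, $N=\{1,\dots,n\}$, fix $i_1\in N$ and let $\hat N^c=N\setminus\{i_1\}$. Then the inequality $$\sum_{j\in\hat N^c}\left(x_{i_1j}+x_{ji_1}\right)-\sum_{j,j'\in\hat N^c:\,j\ne j'} x_{jj'}\le 2-\frac{(n-2)(n-3)}{2}$$ is a valid inequality for the weak order polytope $P^n_{WO}$, i.e. it holds for every point $x\in P^n_{WO}$.
   Context: Let $N=\{1,\dots,n\}$ and $A_N=\{(i,j): i,j\in N, i\ne j\}$. A weak order on $N$ is a binary relation $W\subseteq N\times N$ that is reflexive, transitive and total; $(i,j)\in W$ is read ''$i$ is preferred over or tied with $j$''. The characteristic vector of $W$ is $x^W\in\{0,1\}^{A_N}$ with $x^W_{(i,j)}=1$ if $(i,j)\in W$ and $0$ otherwise. The weak order polytope $P^n_{WO}$ is the convex hull of the characteristic vectors of all weak orders on $N$; its points are vectors $x\in\mathbb{R}^{A_N}$ and $x_{ij}$ denotes the coordinate $x_{(i,j)}$. *)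

From mathcomp Require Import all_boot all_order all_algebra.
Set Implicit Arguments. Unset Strict Implicit. Unset Printing Implicit Defensive.
Import Order.TTheory GRing.Theory Num.Theory.
Local Open Scope ring_scope.

Definition weak_order (n : nat) (W : rel 'I_n) : Prop :=
  reflexive W /\ transitive W /\ total W.

Definition char_vec (R : pzRingType) (n : nat) (W : rel 'I_n) (i j : 'I_n) : R :=
  (W i j : nat)%:R.

(* Points of R^{A_N} are represented as x : 'I_n -> 'I_n -> R; only the
   off-diagonal coordinates x i j (i != j) are meaningful.
   x lies in the weak order polytope iff (on A_N) it is a convex combination
   of finitely many characteristic vectors of weak orders. *)
Definition in_weak_order_polytope (R : realFieldType) (n : nat)
  (x : 'I_n -> 'I_n -> R) : Prop :=
  exists (k : nat) (lam : 'I_k -> R) (W : 'I_k -> rel 'I_n),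
    (forall t, weak_order (W t)) /\
    (forall t, 0 <= lam t) /\
    \sum_(t < k) lam t = 1 /\
    (forall i j : 'I_n, i != j -> x i j = \sum_(t < k) lam t * char_vec R (W t) i j).

From mathcomp Require Import all_boot all_order all_algebra.
From mathcomp Require Import lra.
Import Order.TTheory GRing.Theory Num.Theory.
Local Open Scope ring_scope.

(* The left-hand side is linear and every point of the polytope is a convex
   combination of characteristic vectors, so it suffices to check a single weak
   order W.  Let m = n - 1 and let t be the number of j tied with i1 in W.  By
   totality the arcs at i1 contribute m + t.  For each unordered pair {j, j'}
   avoiding i1, totality gives x_jj' + x_j'j >= 1, and transitivity through i1
   gives 2 when both are tied with i1; so the arcs avoiding i1 contribute at
   least (m(m-1) + t(t-1))/2.  The bound then reduces to (t-1)(t-2) >= 0, true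
   for every integer t. *)

Section OffDiagonalSums.

Context {I : finType} (D : pred I).

Lemma sum_offdiag_swap {V : nmodType} (F : I -> I -> V) :
  \sum_(j | D j) \sum_(j' | D j' && (j' != j)) F j' j
  = \sum_(j | D j) \sum_(j' | D j' && (j' != j)) F j j'.
Proof.
rewrite (exchange_big_dep D) => [|j j' _ /andP[] //].
by apply: eq_bigr => j Dj; apply: eq_bigl => j'; rewrite Dj eq_sym.
Qed.

Lemma sum_offdiag_mul {R : pzRingType} (a : I -> R) :
  \sum_(j | D j) \sum_(j' | D j' && (j' != j)) a j * a j'
  = (\sum_(j | D j) a j) ^+ 2 - \sum_(j | D j) a j ^+ 2.
Proof.
rewrite expr2 big_distrlr -sumrB /=; apply: eq_bigr => j Dj.
by rewrite (bigD1 j Dj) /= addrAC subrr add0r.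
Qed.

End OffDiagonalSums.

Lemma convex_combination_le (R : numDomainType) (J : finType) (lam f : J -> R)
    (b : R) :
  (forall t, 0 <= lam t) -> \sum_t lam t = 1 -> (forall t, f t <= b) ->
  \sum_t lam t * f t <= b.
Proof.
move=> lam_ge0 lam_sum1 f_le; rewrite -[b]mul1r -lam_sum1 mulr_suml.
by apply: ler_sum => t _; rewrite ler_wpM2l.
Qed.

Section StarMinusClique.

Context {R : pzRingType} {n : nat} (i1 : 'I_n).

Definition star_minus_clique (x : 'I_n -> 'I_n -> R) : R :=
  \sum_(j < n | j != i1) (x i1 j + x j i1)
  - \sum_(j < n | j != i1) \sum_(j' < n | (j' != i1) && (j' != j)) x j j'.

Lemma eq_star_minus_clique {x y : 'I_n -> 'I_n -> R} :
  (forall i j, i != j -> x i j = y i j) ->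
  star_minus_clique x = star_minus_clique y.
Proof.
move=> xy; congr (_ - _).
  by apply: eq_bigr => j ji1; rewrite !xy // eq_sym.
apply: eq_bigr => j _; apply: eq_bigr => j' /andP[_ j'j].
by rewrite xy // eq_sym.
Qed.

Lemma star_minus_clique_sum (J : finType) (lam : J -> R)
    (y : J -> 'I_n -> 'I_n -> R) :
  star_minus_clique (fun i j => \sum_t lam t * y t i j)
  = \sum_t lam t * star_minus_clique (y t).
Proof.
under [RHS]eq_bigr do rewrite mulrBr !mulr_sumr.
rewrite sumrB; congr (_ - _); rewrite exchange_big; apply: eq_bigr => j _.
  by rewrite -big_split; apply: eq_bigr => t _; rewrite mulrDr.
under [RHS]eq_bigr do rewrite mulr_sumr.
by rewrite exchange_big.
Qed.

End StarMinusClique.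

Definition tied {T : Type} (W : rel T) : rel T := fun i j => W i j && W j i.

Lemma nat_consecutive_prod_ge0 (R : realDomainType) (k : nat) :
  0 <= (k%:R - 1) * (k%:R - 2) :> R.
Proof.
case: k => [|[|k]]; first by rewrite !sub0r mulrNN mulr_ge0.
  by rewrite subrr mul0r.
have := ler0n R k; rewrite -addn2 natrD => k_ge0.
by apply: mulr_ge0; lra.
Qed.

Section WeakOrderVertex.

Variables (R : realFieldType) (n : nat) (i1 : 'I_n) (W : rel 'I_n).
Hypothesis W_weak : weak_order W.

Let chi := char_vec R W.
Let T j : R := (tied W i1 j)%:R.

Lemma char_vec_add_tr i j : chi i j + chi j i = 1 + (tied W i j)%:R.
Proof.
case: W_weak => _ [_ W_total]; rewrite /chi /char_vec /tied.
by have := W_total i j; case: (W i j); case: (W j i); rewrite ?add0r ?addr0.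
Qed.

Lemma char_vec_add_tr_ge j j' : 1 + T j * T j' <= chi j j' + chi j' j.
Proof.
case: W_weak => _ [W_trans _]; rewrite char_vec_add_tr lerD2l /T.
have [/andP[ij ji] | _] := boolP (tied W i1 j); last by rewrite mul0r.
have [/andP[ij' j'i] | _] := boolP (tied W i1 j'); last by rewrite mulr0.
by rewrite /tied (W_trans _ _ _ ji ij') (W_trans _ _ _ j'i ij) mulr1.
Qed.

Lemma star_minus_clique_char_vec_le :
  star_minus_clique i1 chi <= 2 - (n%:R - 2) * (n%:R - 3) / 2.
Proof.
pose t := \sum_(j < n | j != i1) T j.
have card_D : \sum_(j < n | j != i1) 1 = n%:R - 1 :> R.
  have n_gt0 : (0 < n)%N := leq_ltn_trans (leq0n i1) (ltn_ord i1).
  by rewrite sumr_const cardC1 card_ord -[in RHS](prednK n_gt0) -natr1 addrK.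
have star : \sum_(j < n | j != i1) (chi i1 j + chi j i1) = (n%:R - 1) + t.
  by under eq_bigr do rewrite char_vec_add_tr; rewrite big_split /= card_D.
pose S := \sum_(j < n | j != i1) \sum_(j' < n | (j' != i1) && (j' != j)) chi j j'.
have T2 j : T j ^+ 2 = T j by rewrite /T; case: tied; rewrite ?expr1n ?expr0n.
have all_pairs := sum_offdiag_mul (fun j : 'I_n => j != i1) (fun _ => 1 : R).
rewrite /= mulr1 expr1n card_D in all_pairs.
have tied_pairs := sum_offdiag_mul (fun j : 'I_n => j != i1) T.
rewrite (eq_bigr _ (fun j _ => T2 j)) -/t in tied_pairs.
have pairs_le : \sum_(j < n | j != i1) \sum_(j' < n | (j' != i1) && (j' != j))
    (1 + T j * T j') <= S + S.
  have S_swap : S = \sum_(j < n | j != i1) \sum_(j' < n | (j' != i1) && (j' != j))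
      chi j' j by rewrite sum_offdiag_swap.
  rewrite {2}S_swap /S -big_split; apply: ler_sum => j _.
  by rewrite -big_split; apply: ler_sum => j' _; apply: char_vec_add_tr_ge.
have t_nat := nat_consecutive_prod_ge0 R (\sum_(j < n | j != i1) tied W i1 j).
rewrite natr_sum -/t in t_nat.
move: pairs_le; rewrite /star_minus_clique star -/S.
under eq_bigr do rewrite big_split /=; rewrite big_split /= all_pairs tied_pairs.
by move=> pairs_le; lra.
Qed.

End WeakOrderVertex.

Theorem mainTheorem1 (R : realFieldType) (n : nat) (hn : (4 <= n)%N)
  (i1 : 'I_n) (x : 'I_n -> 'I_n -> R) :
  in_weak_order_polytope x ->
  \sum_(j < n | j != i1) (x i1 j + x j i1)
  - \sum_(j < n | j != i1) \sum_(j' < n | (j' != i1) && (j' != j)) x j j'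
  <= 2 - (n%:R - 2) * (n%:R - 3) / 2.
Proof.
case=> k [lam [W [W_weak [lam_ge0 [lam_sum1 x_eq]]]]].
rewrite -/(star_minus_clique i1 x) (eq_star_minus_clique i1 x_eq).
rewrite star_minus_clique_sum; apply: convex_combination_le => // t.
exact: star_minus_clique_char_vec_le.
Qed.
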